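(* Let $v_1,\dots,v_n\in\mathbb{R}^d$, let $Z\in\mathbb{R}^{d\times d}$ be symmetric with $Z\succeq\frac14I$, let $\alpha=8\sqrt d$, and let $A=(\alpha Z-\ell I)^{-2}$ where $\ell\in\mathbb{R}$ is the unique scalar such that $\alpha Z-\ell I\succ0$ and $\operatorname{tr}(A)=1$. Then for every $1\le i\le n$, \[ \langle v_iv_i^\top,Z^{-1}\rangle\le\alpha\langle v_iv_i^\top,A^{1/2}\rangle\le\alpha\lambda_{\min}(Z)\langle v_iv_i^\top,Z^{-1}\rangle. \]
   Context: $\langle M,N\rangle=\operatorname{tr}(MN)$ for symmetric matrices. *)

From HB Require Import structures.
From mathcomp Require Import all_boot all_order all_algebra.
Set Implicit Arguments. Unset Strict Implicit. Unset Printing Implicit Defensive.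
Import Order.TTheory GRing.Theory Num.Theory.
Local Open Scope ring_scope.

Definition symmx (R : rcfType) (d : nat) (M : 'M[R]_d) : Prop := M^T = M.

Definition psdmx (R : rcfType) (d : nat) (M : 'M[R]_d) : Prop :=
  symmx M /\ forall x : 'cV[R]_d, 0 <= (x^T *m M *m x) 0 0.

Definition pdmx (R : rcfType) (d : nat) (M : 'M[R]_d) : Prop :=
  symmx M /\ forall x : 'cV[R]_d, x != 0 -> 0 < (x^T *m M *m x) 0 0.

Definition mxinner (R : rcfType) (d : nat) (M N : 'M[R]_d) : R := \tr (M *m N).

Definition is_psd_sqrt (R : rcfType) (d : nat) (A S : 'M[R]_d) : Prop :=
  psdmx S /\ S *m S = A.

Definition is_lambda_min (R : rcfType) (d : nat) (M : 'M[R]_d) (lam : R) : Prop :=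
  eigenvalue M lam /\ forall b, eigenvalue M b -> lam <= b.

(* Put B := alpha Z - l I; then A^(1/2) = B^-1, by uniqueness of positive square roots.
   An eigenvector of Z for lambda_min is an eigenvector of B^-1 for the eigenvalue
   (alpha lambda_min - l)^-1, whose square is at most tr (B^-2) = 1: hence
   alpha lambda_min - l >= 1.  If l < 0, then B >= c I with c > alpha / 4 = 2 sqrt d, and
   every column y of B^-1 satisfies c |y|^2 <= y_k <= |y|, so tr (B^-2) <= d / c^2 < 1.
   Hence l >= 0, and then Z / lambda_min <= B <= alpha Z in the Loewner order (the first
   inequality uses lambda_min I <= Z, i.e. the spectral theorem); matrix inversion
   reverses both inequalities. *)

From HB Require Import structures.
From mathcomp Require Import all_boot all_order all_algebra.
From mathcomp Require Import complex ring lra.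
Import Order.TTheory GRing.Theory Num.Theory.
Local Open Scope ring_scope.

Set Implicit Arguments.
Unset Strict Implicit.
Unset Printing Implicit Defensive.

Lemma sum_mul_sqr_le (R : realFieldType) (I : finType) (a b : I -> R) :
  (\sum_i a i * b i) ^+ 2 <= (\sum_i a i ^+ 2) * (\sum_i b i ^+ 2).
Proof.
set A := \sum_i a i ^+ 2; set B := \sum_i b i ^+ 2; set P := \sum_i a i * b i.
have A_ge0 : 0 <= A by apply: sumr_ge0 => i _; apply: sqr_ge0.
have [A0|A_neq0] := eqVneq A 0.
  have a0 i : a i = 0.
    apply/eqP; rewrite -sqrf_eq0; apply/eqP.
    exact: psumr_eq0P (fun i _ => sqr_ge0 (a i)) A0 i isT.
  by rewrite /P big1 ?expr0n ?A0 ?mul0r // => i _; rewrite a0 mul0r.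
have : 0 <= \sum_i (P * a i - A * b i) ^+ 2 by apply: sumr_ge0 => i _; apply: sqr_ge0.
have -> : \sum_i (P * a i - A * b i) ^+ 2 = A * (A * B - P ^+ 2).
  rewrite (eq_bigr (fun i =>
      P ^+ 2 * a i ^+ 2 - 2%:R * P * A * (a i * b i) + A ^+ 2 * b i ^+ 2)); last first.
    by move=> i _; ring.
  by rewrite big_split sumrB /= -!mulr_sumr -/A -/B -/P; ring.
by rewrite pmulr_rge0 ?subr_ge0 // lt_def A_neq0.
Qed.

Section QuadraticForms.
Variable R : rcfType.
Implicit Types (a : R).

Definition qform n (M : 'M[R]_n) (x : 'cV[R]_n) : R := (x^T *m M *m x) 0 0.
Definition sqnorm n (x : 'cV[R]_n) : R := (x^T *m x) 0 0.

Lemma tr_mx11 (A : 'M[R]_1) : A^T 0 0 = A 0 0.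
Proof. by rewrite mxE. Qed.

Variable n : nat.
Implicit Types (M N P Q S C D B : 'M[R]_n) (x y : 'cV[R]_n).

Lemma sqnormE x : sqnorm x = \sum_i x i 0 ^+ 2.
Proof. by rewrite /sqnorm mxE; apply: eq_bigr => i _; rewrite mxE expr2. Qed.

Lemma sqnorm_ge0 x : 0 <= sqnorm x.
Proof. by rewrite sqnormE; apply: sumr_ge0 => i _; apply: sqr_ge0. Qed.

Lemma sqnorm_eq0 x : (sqnorm x == 0) = (x == 0).
Proof.
apply/eqP/eqP => [x0|->]; last by rewrite sqnormE big1 // => i _; rewrite mxE expr0n.
apply/matrixP => i j; rewrite ord1 mxE; apply/eqP; rewrite -sqrf_eq0; apply/eqP.
by move: x0; rewrite sqnormE => /psumr_eq0P; apply=> // k _; apply: sqr_ge0.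
Qed.

Lemma sqnorm_gt0 x : x != 0 -> 0 < sqnorm x.
Proof. by rewrite lt_def sqnorm_ge0 sqnorm_eq0 andbT. Qed.

Lemma sqr_coord_le_sqnorm x i : x i 0 ^+ 2 <= sqnorm x.
Proof. by rewrite sqnormE (bigD1 i) //= lerDl sumr_ge0 // => j _; apply: sqr_ge0. Qed.

Lemma sqnormZ a x : sqnorm (a *: x) = a ^+ 2 * sqnorm x.
Proof. by rewrite /sqnorm [(a *: x)^T]linearZ -scalemxAl -scalemxAr !mxE mulrA expr2. Qed.

Lemma qform0 M : qform M 0 = 0.
Proof. by rewrite /qform mulmx0 mxE. Qed.

Lemma qform1 x : qform 1%:M x = sqnorm x.
Proof. by rewrite /qform mulmx1. Qed.

Lemma qformD M N x : qform (M + N) x = qform M x + qform N x.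
Proof. by rewrite /qform mulmxDr mulmxDl mxE. Qed.

Lemma qformN M x : qform (- M) x = - qform M x.
Proof. by rewrite /qform mulmxN mulNmx mxE. Qed.

Lemma qformB M N x : qform (M - N) x = qform M x - qform N x.
Proof. by rewrite qformD qformN. Qed.

Lemma qformZ a M x : qform (a *: M) x = a * qform M x.
Proof. by rewrite /qform -scalemxAr -scalemxAl mxE. Qed.

Lemma qform_invmxZ a M x : a != 0 -> M \in unitmx ->
  qform (invmx (a *: M)) x = a^-1 * qform (invmx M) x.
Proof. by move=> a_neq0 Mu; rewrite invmxZ ?qformZ // unitmxZ ?unitfE. Qed.

Lemma qform_scalar a x : qform a%:M x = a * sqnorm x.
Proof. by rewrite -scalemx1 qformZ qform1. Qed.

Lemma qform_eigen M a x : M *m x = a *: x -> qform M x = a * sqnorm x.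
Proof. by move=> Mx; rewrite /qform -mulmxA Mx -scalemxAr mxE. Qed.

Lemma bform_sym M x y : symmx M -> (x^T *m M *m y) 0 0 = (y^T *m M *m x) 0 0.
Proof. by move=> Ms; rewrite -tr_mx11 !trmx_mul trmxK Ms mulmxA. Qed.

Lemma dotmx_sym x y : (x^T *m y) 0 0 = (y^T *m x) 0 0.
Proof. by rewrite -tr_mx11 trmx_mul trmxK. Qed.

Lemma pdmx_psdmx M : pdmx M -> psdmx M.
Proof.
move=> [Ms Mpd]; split=> // x; have [->|x_neq0] := eqVneq x 0.
  by rewrite -/(qform M 0) qform0.
exact/ltW/Mpd.
Qed.

Lemma pdmx_unit M : pdmx M -> M \in unitmx.
Proof.
move=> [_ Mpd]; rewrite unitmxE -det_tr unitfE.
apply/negP => /det0P [v v_neq0 vM].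
have /Mpd : v^T != 0 by rewrite trmx_eq0.
by rewrite -mulmxA -[M]trmxK -trmx_mul vM trmx0 mulmx0 mxE ltxx.
Qed.

Lemma pdmx_invmx M : pdmx M -> pdmx (invmx M).
Proof.
move=> Mpd; have Mu := pdmx_unit Mpd; have [Ms Mpos] := Mpd.
have iMs : symmx (invmx M) by rewrite /symmx trmx_inv Ms.
split=> // x x_neq0; have := Mpos (invmx M *m x).
rewrite trmx_mul iMs !mulmxA mulmxKV //.
apply; apply: contraNneq x_neq0 => iMx0.
by rewrite -(mulKVmx Mu x) iMx0 mulmx0.
Qed.

Lemma qformBr M x y : symmx M ->
  qform M (x - y) = qform M x - 2%:R * (x^T *m M *m y) 0 0 + qform M y.
Proof.
move=> Ms; have entryB (A B : 'M[R]_1) : (A - B) 0 0 = A 0 0 - B 0 0 by rewrite !mxE.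
rewrite /qform [(x - y)^T]linearB /= mulmxBr !mulmxBl !entryB.
rewrite [(y^T *m M *m x) 0 0]bform_sym //; lra.
Qed.

Lemma qform_invmx_le P Q x : symmx P -> pdmx Q ->
  (forall y, qform Q y <= qform P y) -> qform (invmx P) x <= qform (invmx Q) x.
Proof.
move=> Ps Qpd QP; have [Qs Qpos] := Qpd.
have Ppd : pdmx P by split=> // y /Qpos/lt_le_trans; apply; apply: QP.
have Pu := pdmx_unit Ppd; have Qu := pdmx_unit Qpd.
set y := invmx P *m x; set z := invmx Q *m x.
have qPy : qform P y = (y^T *m x) 0 0 by rewrite /qform -mulmxA mulKVmx.
have qQz : qform Q z = (z^T *m x) 0 0 by rewrite /qform -mulmxA mulKVmx.
have bQyz : (y^T *m Q *m z) 0 0 = (y^T *m x) 0 0 by rewrite -mulmxA mulKVmx.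
have -> : qform (invmx P) x = (y^T *m x) 0 0 by rewrite /qform -mulmxA dotmx_sym.
have -> : qform (invmx Q) x = (z^T *m x) 0 0 by rewrite /qform -mulmxA dotmx_sym.
(* [0 <= Q[y - z] = Q[y] - 2 y^T x + z^T x <= P[y] - 2 y^T x + z^T x = z^T x - y^T x] *)
have := (pdmx_psdmx Qpd).2 (y - z); rewrite -/(qform Q _) qformBr // bQyz qQz.
have := QP y; rewrite qPy; lra.
Qed.

Lemma mxtrace_sym_sandwich D M : symmx D ->
  \tr (D *m M *m D) = \sum_k qform M (col k D).
Proof.
move=> Ds; apply: eq_bigr => k _.
by rewrite /qform tr_col Ds -row_mul colE mulmxA -row_mul -colE !mxE.
Qed.

Lemma psdmx_sqrt_unique S C : psdmx S -> pdmx C -> S *m S = C *m C -> S = C.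
Proof.
move=> [Ss Spsd] Cpd SSCC; have [Cs Cpos] := Cpd; have Cpsd := (pdmx_psdmx Cpd).2.
set D := S - C; have Ds : symmx D by rewrite /symmx linearB /= Ss Cs.
(* [S D + D C = S^2 - C^2 = 0], and both [tr (D S D)] and [tr (D C D)] are nonnegative *)
have SDDC : S *m D + D *m C = 0 by rewrite /D mulmxBr mulmxBl SSCC addrA subrK subrr.
have : \tr (D *m S *m D) + \tr (D *m C *m D) = 0.
  rewrite [\tr (D *m C *m D)]mxtrace_mulC mulmxA -!mulmxA -mxtraceD -mulmxDr.
  by rewrite SDDC mulmx0 mxtrace0.
rewrite !mxtrace_sym_sandwich //.
have sS : 0 <= \sum_k qform S (col k D) by apply: sumr_ge0 => k _; apply: Spsd.
have sC : 0 <= \sum_k qform C (col k D) by apply: sumr_ge0 => k _; apply: Cpsd.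
move=> sum0; have sC0 : \sum_k qform C (col k D) = 0 by lra.
have qC0 k : qform C (col k D) = 0 by apply: (psumr_eq0P _ sC0) => // j _; apply: Cpsd.
have colD0 k : col k D = 0.
  by apply/eqP; apply: contraLR isT => /Cpos; rewrite -/(qform C _) qC0 ltxx.
apply/subr0_eq/matrixP => i k.
by have /matrixP/(_ i 0) := colD0 k; rewrite !mxE.
Qed.

Lemma mxtrace_outer_mul x M : \tr (x *m x^T *m M) = qform M x.
Proof. by rewrite -mulmxA mxtrace_mulC /qform /mxtrace big_ord1. Qed.

Lemma sym_eigenvector M a : symmx M -> eigenvalue M a ->
  exists2 x : 'cV[R]_n, x != 0 & M *m x = a *: x.
Proof.
move=> Ms /eigenvalueP [u uM u_neq0]; exists u^T; first by rewrite trmx_eq0.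
by rewrite -Ms -trmx_mul uM linearZ.
Qed.

End QuadraticForms.

Lemma sqnorm_mulmx_le (R : rcfType) m n (M : 'M[R]_(m, n)) (x : 'cV[R]_n) :
  sqnorm (M *m x) <= \tr (M^T *m M) * sqnorm x.
Proof.
rewrite /mxtrace (eq_bigr (fun j => \sum_i M i j ^+ 2)); last first.
  by move=> j _; rewrite mxE; apply: eq_bigr => i _; rewrite mxE expr2.
rewrite exchange_big mulr_suml [sqnorm (M *m x)]sqnormE; apply: ler_sum => i _.
by rewrite mxE sqnormE; apply: sum_mul_sqr_le.
Qed.

Section TraceBounds.
Variables (R : rcfType) (n : nat).
Implicit Types (M B : 'M[R]_n) (x y : 'cV[R]_n).

Lemma eigenvalue_sqr_le_mxtrace M a x : symmx M -> M *m x = a *: x -> x != 0 ->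
  a ^+ 2 <= \tr (M *m M).
Proof.
move=> Ms Mx x_neq0; have := sqnorm_mulmx_le M x.
by rewrite Ms Mx sqnormZ ler_pM2r // sqnorm_gt0.
Qed.

Lemma coord_bound_sqnorm_le1 c y i : 0 <= c -> c * sqnorm y <= y i 0 ->
  c ^+ 2 * sqnorm y <= 1.
Proof.
move=> c_ge0 cy; have y2 := sqr_coord_le_sqnorm y i; have y_ge0 := sqnorm_ge0 y.
have [->|y_neq0] := eqVneq (sqnorm y) 0; first by rewrite mulr0.
have y_gt0 : 0 < sqnorm y by rewrite lt_def y_neq0.
rewrite -(ler_pM2r y_gt0) mul1r; apply: le_trans y2.
have cy_ge0 : 0 <= c * sqnorm y by rewrite mulr_ge0.
by rewrite -mulrA -expr2 -exprMn ler_sqr ?nnegrE //; apply: le_trans cy.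
Qed.

Lemma mxtrace_invmx_sqr_le B c : symmx B -> B \in unitmx -> 0 <= c ->
  (forall y, c * sqnorm y <= qform B y) -> c ^+ 2 * \tr (invmx B *m invmx B) <= n%:R.
Proof.
move=> Bs Bu c_ge0 Bc; set C := invmx B; have Cs : symmx C by rewrite /symmx trmx_inv Bs.
rewrite -[C *m C](congr1 (mulmx^~ C) (mulmx1 C)) mxtrace_sym_sandwich //.
rewrite mulr_sumr -[n in n%:R]card_ord -sumr_const; apply: ler_sum => k _.
rewrite qform1; apply: (coord_bound_sqnorm_le1 (i := k)) => //.
suff <- : qform B (col k C) = col k C k 0 by apply: Bc.
have BCk : B *m col k C = col k 1%:M by rewrite !colE mulmxA /C mulmxV.
by rewrite /qform -mulmxA BCk -tr_mx11 trmx_mul trmxK tr_col trmx1 -row_mul mul1mx mxE.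
Qed.

End TraceBounds.

Lemma spectral_diag_eigenvalue (C : numClosedFieldType) n (A : 'M[C]_n) k :
  A \is normalmx -> eigenvalue A (spectral_diag A 0 k).
Proof.
move=> /orthomx_spectralP A_eq; have Pu := spectral_unit A.
set P := spectralmx A in A_eq Pu *; set D := spectral_diag A in A_eq *.
apply/eigenvalueP; exists (row k P).
  rewrite [X in _ *m X]A_eq !mulmxA -row_mul mulmxV // -row_mul mul1mx.
  by rewrite row_diag_mx -scalemxAl -rowE.
apply/negP => /eqP Pk0.
have : row k P *m invmx P = 0 by rewrite Pk0 mul0mx.
rewrite rowE mulmxK // => /matrixP /(_ 0 k); rewrite !mxE !eqxx /=.
by move/eqP; rewrite oner_eq0.
Qed.

Section RealSpectralBound.
Local Open Scope complex_scope.
Local Open Scope sesquilinear_scope.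
(* reopened last so that [_^*] denotes [conjC] rather than [conjc] *)
Local Open Scope ring_scope.

Lemma qform_ge_eigenvalue_lb (R : rcfType) n (Z : 'M[R]_n) lam x : symmx Z ->
  (forall r, eigenvalue Z r -> lam <= r) -> lam * sqnorm x <= qform Z x.
Proof.
move=> Zs Z_lb; set Zc := map_mx (real_complex R) Z.
have conj_real (r : R) : r%:C^* = r%:C by apply/conj_Creal/complex_realP; exists r.
have Zc_herm : Zc \is hermsymmx.
  apply/is_hermitianmxP; rewrite expr0 scale1r; apply/matrixP => i j.
  by rewrite !mxE conj_real -[in LHS]Zs mxE.
set P := spectralmx Zc; set D := spectral_diag Zc.
have Pu : P \is unitarymx by apply: spectral_unitarymx.
have Zc_eq : Zc = P ^t* *m diag_mx D *m P.
  by rewrite -invmx_unitary //; apply/orthomx_spectralP/hermitian_normalmx.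
have D_lb k : exists2 r, D 0 k = r%:C & lam <= r.
  have /complex_realP [r Dk] := mxOverP (hermitian_spectral_diag_real Zc_herm) 0 k.
  exists r => //; apply: Z_lb; rewrite -(eigenvalue_map (real_complex R)).
  by move: (spectral_diag_eigenvalue k (hermitian_normalmx Zc_herm)); rewrite -/D Dk.
suff : (lam * sqnorm x)%:C <= (qform Z x)%:C by rewrite lecR.
set xc := map_mx (real_complex R) x; set y := P *m xc.
have xc_conj : xc ^t* = xc^T by apply/matrixP => i j; rewrite !mxE conj_real.
have qform_C M : (qform M x)%:C = (xc ^t* *m map_mx (real_complex R) M *m xc) 0 0.
  by rewrite xc_conj map_trmx -!map_mxM [RHS]mxE.
have PtP : P ^t* *m P = 1%:M by rewrite -invmx_unitary // mulVmx // spectral_unit.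
have y_conj : y ^t* = xc ^t* *m P ^t* by rewrite trmx_mul map_mxM.
(* with [y := P x], both sides are sums over the coordinates of [y] *)
rewrite -qform1 rmorphM /= !qform_C map_mx1 -/Zc Zc_eq -PtP !mulmxA -y_conj.
rewrite -!(mulmxA _ P xc) -/y mul_mx_diag !mxE mulr_sumr; apply: ler_sum => k _.
have [r Dk lam_r] := D_lb k.
rewrite !mxE Dk mulrAC [_%:C * (_ * _)]mulrC -subr_ge0 -mulrBr.
by rewrite mulr_ge0 // ?subr_ge0 ?lecR // mulrC mul_conjC_ge0.
Qed.

End RealSpectralBound.

Section ShiftedInverse.
Variables (R : rcfType) (d : nat) (Z : 'M[R]_d) (alpha l lam : R).
Hypotheses (Zs : symmx Z) (Z_ge : psdmx (Z - 4%:R^-1%:M)).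
Hypotheses (alpha_ge0 : 0 <= alpha) (alpha_large : d%:R <= (alpha / 4%:R) ^+ 2).
Local Notation B := (alpha *: Z - l%:M).
Hypotheses (Bpd : pdmx B) (trB : \tr (invmx B *m invmx B) = 1).
Hypothesis lam_min : is_lambda_min Z lam.

Lemma qform_shift x : qform B x = alpha * qform Z x - l * sqnorm x.
Proof. by rewrite qformB qformZ qform_scalar. Qed.

Lemma qform_Z_ge_quarter x : 4%:R^-1 * sqnorm x <= qform Z x.
Proof. by have := Z_ge.2 x; rewrite -/(qform _ x) qformB qform_scalar subr_ge0. Qed.

Lemma qform_Z_ge_lambda_min x : lam * sqnorm x <= qform Z x.
Proof. exact: qform_ge_eigenvalue_lb Zs lam_min.2. Qed.

Lemma Z_pd : pdmx Z.
Proof.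
split=> // x /sqnorm_gt0 x_gt0; apply: lt_le_trans (qform_Z_ge_quarter x).
by rewrite mulr_gt0 // invr_gt0 ltr0n.
Qed.

Lemma lambda_min_ge_quarter : 4%:R^-1 <= lam.
Proof.
have [u u_neq0 Zu] := sym_eigenvector Zs lam_min.1.
by have := qform_Z_ge_quarter u; rewrite (qform_eigen Zu) ler_pM2r // sqnorm_gt0.
Qed.

Lemma lambda_min_gt0 : 0 < lam.
Proof. by apply: lt_le_trans lambda_min_ge_quarter; rewrite invr_gt0 ltr0n. Qed.

(* [(alpha lam - l)^-1] is an eigenvalue of [B^-1], and [tr (B^-2) = 1] bounds it by 1 *)
Lemma shift_ge1 : 1 <= alpha * lam - l.
Proof.
have [u u_neq0 Zu] := sym_eigenvector Zs lam_min.1.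
set mu := alpha * lam - l; have Bu : B *m u = mu *: u.
  by rewrite mulmxBl -scalemxAl Zu mul_scalar_mx scalerA scalerBl.
have mu_gt0 : 0 < mu.
  by have := Bpd.2 u u_neq0; rewrite -/(qform _ u) (qform_eigen Bu) pmulr_lgt0 // sqnorm_gt0.
have iBu : invmx B *m u = mu^-1 *: u.
  have mu_neq0 : mu != 0 by rewrite gt_eqF.
  by rewrite -[in LHS](scalerK mu_neq0 u) -scalemxAr -Bu mulKmx ?(pdmx_unit Bpd).
have iBs : symmx (invmx B) by rewrite /symmx trmx_inv Bpd.1.
have := eigenvalue_sqr_le_mxtrace iBs iBu u_neq0.
by rewrite trB expr_le1 ?invr_ge0 ?(ltW mu_gt0) // invf_le1.
Qed.

(* if [l < 0] then [B >= c I] with [c > alpha / 4], which forces [tr (B^-2) <= d / c^2 < 1] *)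
Lemma shift_ge0 : 0 <= l.
Proof.
rewrite leNgt; apply/negP => l_lt0; set c := alpha / 4%:R - l.
have c_gt : alpha / 4%:R < c by rewrite /c; lra.
have c_ge0 : 0 <= c by apply: le_trans (ltW c_gt); rewrite divr_ge0.
have Bc y : c * sqnorm y <= qform B y.
  have : alpha * (4%:R^-1 * sqnorm y) <= alpha * qform Z y.
    by rewrite ler_wpM2l ?qform_Z_ge_quarter.
  rewrite qform_shift /c; lra.
have := mxtrace_invmx_sqr_le Bpd.1 (pdmx_unit Bpd) c_ge0 Bc; rewrite trB mulr1.
apply/negP; rewrite -ltNge; apply: le_lt_trans alpha_large _.
by rewrite ltr_pXn2r // ?nnegrE ?divr_ge0.
Qed.

Lemma alpha_gt0 : 0 < alpha.
Proof.
rewrite lt_def alpha_ge0 andbT; apply: contraTneq shift_ge1 => ->.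
by rewrite mul0r -ltNge; have := shift_ge0; lra.
Qed.

Lemma qform_invmx_Z_le x : qform (invmx Z) x <= alpha * qform (invmx B) x.
Proof.
have aZs : symmx (alpha *: Z) by rewrite /symmx linearZ /= Zs.
have ai_gt0 : 0 < alpha^-1 by rewrite invr_gt0 alpha_gt0.
have := qform_invmx_le x aZs Bpd.
rewrite qform_invmxZ ?gt_eqF ?alpha_gt0 ?(pdmx_unit Z_pd) //.
move=> le_inv; rewrite -(ler_pM2l ai_gt0) mulKf ?gt_eqF ?alpha_gt0 //; apply: le_inv => y.
by rewrite qform_shift qformZ lerBlDr lerDl mulr_ge0 ?shift_ge0 ?sqnorm_ge0.
Qed.

(* [B - Z / lam = ((alpha lam - l - 1) Z + l (Z - lam I)) / lam] is positive semidefinite *)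
Lemma qform_invmx_shift_le x : qform (invmx B) x <= lam * qform (invmx Z) x.
Proof.
have lam_gt0 := lambda_min_gt0; have Z_pos := Z_pd.2.
have lZpd : pdmx (lam^-1 *: Z).
  split; first by rewrite /symmx linearZ /= Zs.
  by move=> y /Z_pos Zy; rewrite -/(qform _ y) qformZ pmulr_rgt0 // invr_gt0.
have := qform_invmx_le x Bpd.1 lZpd.
rewrite qform_invmxZ ?invr_eq0 ?gt_eqF ?(pdmx_unit Z_pd) // invrK; apply=> y.
rewrite qformZ qform_shift -(ler_pM2l lam_gt0) mulrA mulfV ?gt_eqF // mul1r.
have Zy := qform_Z_ge_lambda_min y.
have Zy_ge0 : 0 <= qform Z y := (pdmx_psdmx Z_pd).2 y.
have := shift_ge1; have := shift_ge0; nra.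
Qed.

End ShiftedInverse.

Theorem lemma4p13 (R : rcfType) (d n : nat) (v : 'I_n -> 'cV[R]_d)
  (Z : 'M[R]_d) (l lam : R) (S : 'M[R]_d) :
  symmx Z ->
  psdmx (Z - (4%:R)^-1%:M) ->
  let alpha := 8%:R * Num.sqrt (d%:R) in
  let A := invmx (alpha *: Z - l%:M) *m invmx (alpha *: Z - l%:M) in
  pdmx (alpha *: Z - l%:M) ->
  \tr A = 1 ->
  is_lambda_min Z lam ->
  is_psd_sqrt A S ->
  forall i : 'I_n,
    mxinner (v i *m (v i)^T) (invmx Z)
      <= alpha * mxinner (v i *m (v i)^T) S
    /\ alpha * mxinner (v i *m (v i)^T) S
      <= alpha * lam * mxinner (v i *m (v i)^T) (invmx Z).
Proof.
move=> Zs Z_ge alpha A Bpd trA lam_min [Spsd SS] i.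
have -> : S = invmx (alpha *: Z - l%:M) := psdmx_sqrt_unique Spsd (pdmx_invmx Bpd) SS.
have alpha_ge0 : 0 <= alpha by rewrite mulr_ge0 ?sqrtr_ge0.
have alpha_large : d%:R <= (alpha / 4%:R) ^+ 2.
  have -> : alpha / 4%:R = 2%:R * Num.sqrt d%:R by rewrite /alpha; field.
  by rewrite exprMn sqr_sqrtr //; have := ler0n R d; lra.
rewrite /mxinner !mxtrace_outer_mul; split.
  exact: qform_invmx_Z_le Zs Z_ge alpha_ge0 alpha_large Bpd trA lam_min _.
rewrite -mulrA ler_wpM2l //.
exact: qform_invmx_shift_le Zs Z_ge alpha_ge0 alpha_large Bpd trA lam_min _.
Qed.
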